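(* Let $L$ be a distributive lattice. If $L$ is countably order bounded, then $\mathrm{FVL}\langle L\rangle$ is order dense in $\mathrm{FBL}\langle L\rangle$. If moreover $L$ is totally ordered, the converse holds: if $\mathrm{FVL}\langle L\rangle$ is order dense in $\mathrm{FBL}\langle L\rangle$, then $L$ is countably order bounded.
   Context: $L^*$ is the set of all lattice homomorphisms $x^*:L\to[-1,1]$; for $x\in L$, $\delta_x:L^*\to\mathbb R$ is $\delta_x(x^* )=x^*(x)$. A function $f:L^*\to\mathbb R$ is positively homogeneous if $f(\lambda x^* )=\lambda f(x^* )$ whenever $\lambda\ge0$ and $\lambda x^*\in L^*$; for such $f$, $\|f\|=\sup\{\sum_{i=1}^m|f(x_i^* )|: m\in\mathbb N,\ x_i^*\in L^*,\ \sup_{x\in L}\sum_{i=1}^m|x_i^*(x)|\le1\}$. $\mathrm{FVL}\langle L\rangle$ is the vector sublattice generated by $\{\delta_x:x\in L\}$ (pointwise operations), and $\mathrm{FBL}\langle L\rangle$ is its norm closure inside the Banach lattice of positively homogeneous functions with finite norm, ordered pointwise. $\mathrm{FVL}\langle L\rangle$ is order dense in $\mathrm{FBL}\langle L\rangle$ if for every $f\in\mathrm{FBL}\langle L\rangle$ with $f>0$ there is $g\in\mathrm{FVL}\langle L\rangle$ with $0<g\le f$. A lattice $L$ is countably order bounded if for every countable $A\subseteq L$ there are $a,b\in L$ with $a\le x\le b$ for all $x\in A$. *)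

From Stdlib Require Import Reals.
From mathcomp Require Import all_boot all_order.
Set Implicit Arguments. Unset Strict Implicit. Unset Printing Implicit Defensive.
Import Order.TTheory.

Local Open Scope R_scope.

Section FBL.
Variables (d : Order.disp_t) (L : distrLatticeType d).

Definition is_lat_hom (h : L -> R) : Prop :=
  (forall x : L, -1 <= h x <= 1) /\
  (forall x y : L, h (Order.meet x y) = Rmin (h x) (h y)) /\
  (forall x y : L, h (Order.join x y) = Rmax (h x) (h y)).

Definition Lstar := {h : L -> R | is_lat_hom h}.

Definition ev (s : Lstar) (x : L) : R := proj1_sig s x.

Definition delta (x : L) : Lstar -> R := fun s => ev s x.

Definition pos_hom (f : Lstar -> R) : Prop :=
  forall (s t : Lstar) (lam : R), 0 <= lam ->
    (forall x : L, ev t x = lam * ev s x) -> f t = lam * f s.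

Definition sumR (l : seq R) : R := foldr Rplus 0 l.

Definition norm_le (f : Lstar -> R) (e : R) : Prop :=
  forall l : seq Lstar,
    (forall x : L, sumR (map (fun s => Rabs (ev s x)) l) <= 1) ->
    sumR (map (fun s => Rabs (f s)) l) <= e.

Definition finite_norm (f : Lstar -> R) : Prop := exists M : R, norm_le f M.

Inductive FVL : (Lstar -> R) -> Prop :=
| FVL_zero : FVL (fun _ => 0)
| FVL_delta (x : L) : FVL (delta x)
| FVL_add (f g : Lstar -> R) : FVL f -> FVL g -> FVL (fun s => f s + g s)
| FVL_scal (c : R) (f : Lstar -> R) : FVL f -> FVL (fun s => c * f s)
| FVL_max (f g : Lstar -> R) : FVL f -> FVL g -> FVL (fun s => Rmax (f s) (g s))
| FVL_min (f g : Lstar -> R) : FVL f -> FVL g -> FVL (fun s => Rmin (f s) (g s)).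

Definition FBL (f : Lstar -> R) : Prop :=
  pos_hom f /\ finite_norm f /\
  forall eps : R, 0 < eps ->
    exists g, FVL g /\ norm_le (fun s => f s - g s) eps.

Definition strictly_pos (f : Lstar -> R) : Prop :=
  (forall s, 0 <= f s) /\ exists s, f s <> 0.

Definition FVL_order_dense : Prop :=
  forall f, FBL f -> strictly_pos f ->
    exists g, FVL g /\ strictly_pos g /\ forall s, g s <= f s.

Definition countable_set (A : L -> Prop) : Prop :=
  exists u : nat -> L, forall x, A x -> exists n, u n = x.

Definition countably_order_bounded : Prop :=
  forall A : L -> Prop, countable_set A ->
    exists a b : L, forall x, A x -> (a <= x)%O /\ (x <= b)%O.

End FBL.

(** An element f > 0 of FBL<L> is a norm limit of approximants g_k in FVL<L>,
    each depending positively homogeneously on finitely many coordinates of L^*.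
    If L is countably order bounded, all these coordinates lie in one interval
    [a, b], which h := max(|delta_a|, |delta_b|) dominates.  Rescaling s by h(s)
    and clipping to [-1, 1] gives s' with g_k(s) = h(s) g_k(s') for every k,
    hence f(s) = h(s) f(s') and g_N <= f + eps_N h.  So the positive part of
    g_N - eps h lies in FVL<L> below f, and is nonzero at s_0 when
    eps_N < eps = f(s_0)/2.

    Conversely, for a chain L and an unbounded sequence (u_n), the function
    f = (|delta_p| - sum_n 2^-n |delta_(u_n) - delta_p|)^+ lies in FBL<L> and is
    positive.  A positive g in FVL<L> below f depends on finitely many
    coordinates, all in some interval [a, b] containing p; some u_n leaves
    [a, b], and the homomorphism equal to 2^(-n-1) s_1 on [a, b] and to -1 or 1
    outside makes f vanish while keeping g positive. *)

From Stdlib Require Import Reals Lra Lia ClassicalEpsilon FunctionalExtensionality Classical.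
From Coquelicot Require Import Coquelicot.
From mathcomp Require Import all_boot all_order.
Import Order.TTheory.
Set Implicit Arguments. Unset Strict Implicit.

Local Open Scope R_scope.

Lemma inv_succ_lt eps : 0 < eps -> exists N : nat, / (INR N + 1) < eps.
Proof.
move=> eps_gt0; have [N [HN N_gt0]] := archimed_cor1 eps eps_gt0.
exists N; apply: Rlt_trans HN; apply: Rinv_lt_contravar; last lra.
have := lt_0_INR N N_gt0; nra.
Qed.

Lemma eq_of_le_inv_succ x y c :
  (forall k : nat, Rabs (x - y) <= c / (INR k + 1)) -> x = y.
Proof.
move=> Hk; apply: Rminus_diag_uniq; apply: Rabs_eq_0; apply: Rle_antisym; last exact: Rabs_pos.
apply: Rnot_lt_le => Hxy; have Hk0 := Hk 0%nat.
rewrite /= Rplus_0_l Rdiv_1_r in Hk0.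
have c_gt0 : 0 < c by lra.
have [N HN] := inv_succ_lt (Rdiv_lt_0_compat _ _ Hxy c_gt0).
have := Hk N; have : c / (INR N + 1) < c * (Rabs (x - y) / c).
  by apply: Rmult_lt_compat_l.
have -> : c * (Rabs (x - y) / c) = Rabs (x - y) by field; lra.
lra.
Qed.

Lemma Rmin_monotone (phi : R -> R) : (forall u v, u <= v -> phi u <= phi v) ->
  forall u v, phi (Rmin u v) = Rmin (phi u) (phi v).
Proof.
move=> phi_mono u v; case: (Rle_lt_dec u v) => Huv.
- by rewrite !Rmin_left //; apply: phi_mono.
- have Hvu : v <= u by lra.
  by rewrite !Rmin_right //; apply: phi_mono.
Qed.

Lemma Rmax_monotone (phi : R -> R) : (forall u v, u <= v -> phi u <= phi v) ->
  forall u v, phi (Rmax u v) = Rmax (phi u) (phi v).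
Proof.
move=> phi_mono u v; case: (Rle_lt_dec u v) => Huv.
- by rewrite !Rmax_right //; apply: phi_mono.
- have Hvu : v <= u by lra.
  by rewrite !Rmax_left //; apply: phi_mono.
Qed.

Lemma Rmax0_sub_le a b : Rabs (Rmax a 0 - Rmax b 0) <= Rabs (a - b).
Proof. by unfold Rmax, Rabs; repeat case: Rle_dec; repeat case: Rcase_abs; lra. Qed.

Section Homomorphisms.
Variables (d : Order.disp_t) (L : distrLatticeType d).
Implicit Types (s : Lstar L) (x y : L).

Lemma ev_bound s x : -1 <= ev s x <= 1.
Proof. exact: (proj1 (proj2_sig s) x). Qed.

Lemma ev_meet s x y : ev s (Order.meet x y) = Rmin (ev s x) (ev s y).
Proof. exact: (proj1 (proj2 (proj2_sig s)) x y). Qed.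

Lemma ev_join s x y : ev s (Order.join x y) = Rmax (ev s x) (ev s y).
Proof. exact: (proj2 (proj2 (proj2_sig s)) x y). Qed.

Lemma ev_le s x y : (x <= y)%O -> ev s x <= ev s y.
Proof. by move=> Hxy; have := ev_meet s x y; rewrite meet_l // => ->; apply: Rmin_r. Qed.

Lemma is_lat_hom_const c : -1 <= c <= 1 -> is_lat_hom (fun _ : L => c).
Proof. by move=> Hc; split; [|split] => *; rewrite ?Rmin_left ?Rmax_left //; lra. Qed.

Lemma is_lat_hom_comp s (phi : R -> R) :
  (forall u v, u <= v -> phi u <= phi v) -> (forall u, -1 <= phi u <= 1) ->
  is_lat_hom (fun x => phi (ev s x)).
Proof.
move=> phi_mono phi_bound; split; [|split] => // x y.
- by rewrite ev_meet Rmin_monotone.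
- by rewrite ev_join Rmax_monotone.
Qed.

(* For [t > 0] the witness is [s / t] clipped to [-1, 1]. *)
Lemma Lstar_rescale s t : 0 <= t ->
  exists s' : Lstar L, forall x, Rabs (ev s x) <= t -> ev s x = t * ev s' x.
Proof.
case=> [t_gt0|<-]; last first.
  by exists s => x Hx; rewrite Rmult_0_l; apply: Rabs_eq_0; have := Rabs_pos (ev s x); lra.
pose clip u := Rmax (-1) (Rmin 1 (u / t)).
have clip_mono u v : u <= v -> clip u <= clip v.
  move=> Huv; have : u / t <= v / t.
    by apply: Rmult_le_compat_r => //; apply/Rlt_le/Rinv_0_lt_compat.
  by rewrite /clip; unfold Rmax, Rmin; repeat case: Rle_dec; lra.
have clip_bound u : -1 <= clip u <= 1.
  by rewrite /clip; unfold Rmax, Rmin; repeat case: Rle_dec; lra.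
exists (exist _ _ (is_lat_hom_comp s clip_mono clip_bound)) => x Hx.
have Hxt : -1 <= ev s x / t <= 1.
  have : -t <= ev s x <= t by move: Hx; unfold Rabs; case: Rcase_abs; lra.
  by split; apply: (Rmult_le_reg_r t) => //; rewrite /Rdiv Rmult_assoc Rinv_l; lra.
move: Hxt; rewrite /ev /= /clip => Hxt.
by rewrite Rmin_right ?Rmax_right; try lra; field; lra.
Qed.

Lemma norm_le_Rabs (f : Lstar L -> R) e : norm_le f e -> forall s, Rabs (f s) <= e.
Proof.
move=> Hf s; have := Hf [:: s]; rewrite /sumR /= !Rplus_0_r; apply=> x.
by have := ev_bound s x; unfold Rabs; case: Rcase_abs; lra.
Qed.

Lemma FVL_ext (f g : Lstar L -> R) : FVL f -> (forall s, f s = g s) -> FVL g.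
Proof. by move=> Hf fg; rewrite -(functional_extensionality _ _ fg). Qed.

Lemma FVL_abs (f : Lstar L -> R) : FVL f -> FVL (fun s => Rabs (f s)).
Proof.
move=> Hf; apply: (FVL_ext (FVL_max Hf (FVL_scal (-1) Hf))) => s.
by unfold Rabs, Rmax; case: Rcase_abs; case: Rle_dec; lra.
Qed.

(* [s'] need only agree with [c s] on [F], so clipped rescalings (not multiples of [s]) qualify. *)
Definition homog_on (g : Lstar L -> R) (F : seq L) : Prop :=
  forall (s s' : Lstar L) (c : R), 0 <= c ->
    (forall x, x \in F -> ev s' x = c * ev s x) -> g s' = c * g s.

Lemma FVL_homog_on g : FVL g -> exists F, homog_on g F.
Proof.
have cat_l F1 F2 (P : L -> Prop) : (forall x, x \in F1 ++ F2 -> P x) -> forall x, x \in F1 -> P x.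
  by move=> H x Hx; apply: H; rewrite mem_cat Hx.
have cat_r F1 F2 (P : L -> Prop) : (forall x, x \in F1 ++ F2 -> P x) -> forall x, x \in F2 -> P x.
  by move=> H x Hx; apply: H; rewrite mem_cat Hx orbT.
elim=> {g} [|x|f g _ [F1 H1] _ [F2 H2]|k f _ [F1 H1]|f g _ [F1 H1] _ [F2 H2]
            |f g _ [F1 H1] _ [F2 H2]].
- by exists [::] => s s' c _ _; ring.
- by exists [:: x] => s s' c _ H; apply: H; rewrite mem_head.
- exists (F1 ++ F2) => s s' c c_ge0 H.
  by rewrite (H1 s s' c c_ge0 (cat_l _ _ _ H)) (H2 s s' c c_ge0 (cat_r _ _ _ H)); ring.
- by exists F1 => s s' c c_ge0 H; rewrite (H1 s s' c c_ge0 H); ring.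
- exists (F1 ++ F2) => s s' c c_ge0 H.
  by rewrite (H1 s s' c c_ge0 (cat_l _ _ _ H)) (H2 s s' c c_ge0 (cat_r _ _ _ H)) RmaxRmult.
- exists (F1 ++ F2) => s s' c c_ge0 H.
  rewrite (H1 s s' c c_ge0 (cat_l _ _ _ H)) (H2 s s' c c_ge0 (cat_r _ _ _ H)).
  by rewrite -Rmin_monotone // => u v Huv; apply: Rmult_le_compat_l.
Qed.

End Homomorphisms.

Section Density.
Variables (d : Order.disp_t) (L : distrLatticeType d).

Lemma countable_bigcup_seq (x0 : L) (F : nat -> seq L) :
  countable_set (fun x => exists k, x \in F k).
Proof.
exists (fun n => if (unpickle n : option (nat * nat)) is Some (k, i) then nth x0 (F k) i else x0).
by move=> x [k Hk]; exists (pickle (k, index x (F k))); rewrite pickleK nth_index.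
Qed.

Lemma FBL_approx_seq (f : Lstar L -> R) : FBL f ->
  exists (g : nat -> Lstar L -> R) (F : nat -> seq L),
    (forall k, FVL (g k) /\ homog_on (g k) (F k)) /\
    forall k s, Rabs (f s - g k s) <= / (INR k + 1).
Proof.
move=> [_ [_ Happ]].
have : forall k : nat, exists gF : (Lstar L -> R) * seq L,
    (FVL gF.1 /\ homog_on gF.1 gF.2) /\ forall s, Rabs (f s - gF.1 s) <= / (INR k + 1).
  move=> k; have e_gt0 : 0 < / (INR k + 1).
    by apply: Rinv_0_lt_compat; have := pos_INR k; lra.
  have [g [Hg Hfg]] := Happ _ e_gt0; have [F HF] := FVL_homog_on Hg.
  by exists (g, F); split=> //; apply: norm_le_Rabs Hfg.
case/choice=> gF HgF; exists (fun k => (gF k).1), (fun k => (gF k).2).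
by split=> k; [exact: proj1 (HgF k)|exact: proj2 (HgF k)].
Qed.

Section Approximants.
Variables (f : Lstar L -> R) (g : nat -> Lstar L -> R) (F : nat -> seq L).
Hypothesis homog_g : forall k, homog_on (g k) (F k).
Hypothesis approx_g : forall k s, Rabs (f s - g k s) <= / (INR k + 1).

Lemma approx_homog s s' t : 0 <= t ->
  (forall k x, x \in F k -> ev s x = t * ev s' x) -> f s = t * f s'.
Proof.
move=> t_ge0 Hss'; apply: (@eq_of_le_inv_succ _ _ (1 + t)) => k.
have := approx_g k s; have := approx_g k s'; rewrite (@homog_g k s' s t t_ge0 (Hss' k)) /Rdiv.
by unfold Rabs; repeat case: Rcase_abs; nra.
Qed.

Lemma approx_le_dominated (h : Lstar L -> R) :
  (forall k x s, x \in F k -> Rabs (ev s x) <= h s) -> (forall s, 0 <= h s) ->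
  forall N s, g N s <= f s + / (INR N + 1) * h s.
Proof.
move=> h_dom h_ge0 N s; have [s' Hs'] := Lstar_rescale s (h_ge0 s).
have Hss' k x : x \in F k -> ev s x = h s * ev s' x.
  by move=> Hx; apply/Hs'/(h_dom k).
rewrite (approx_homog (h_ge0 s) Hss') (@homog_g N s' s (h s) (h_ge0 s) (Hss' N)).
by have := approx_g N s'; have := h_ge0 s; unfold Rabs; case: Rcase_abs; nra.
Qed.

End Approximants.

Lemma FVL_order_dense_of_bounded (x0 : L) :
  countably_order_bounded L -> FVL_order_dense L.
Proof.
move=> Lcob f Ff [f_ge0 [s0 fs0]].
have [g [F [HgF approx_g]]] := FBL_approx_seq Ff.
have [a [b Hab]] := Lcob _ (countable_bigcup_seq x0 F).
pose h s := Rmax (Rabs (ev s a)) (Rabs (ev s b)).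
have Hh : FVL h := FVL_max (FVL_abs (FVL_delta a)) (FVL_abs (FVL_delta b)).
have h_ge0 s : 0 <= h s by apply: Rle_trans (Rabs_pos _) (Rmax_l _ _).
have h_le1 s : h s <= 1.
  by have := ev_bound s a; have := ev_bound s b; rewrite /h; unfold Rmax, Rabs;
     repeat case: Rle_dec; repeat case: Rcase_abs; lra.
have h_dom k x s : x \in F k -> Rabs (ev s x) <= h s.
  by move=> Hx; have [Hax Hxb] := Hab x (ex_intro _ k Hx); apply: RmaxAbs; apply: ev_le.
have g_le := approx_le_dominated (fun k => proj2 (HgF k)) approx_g h_dom h_ge0.
pose eps := f s0 / 2.
have eps_gt0 : 0 < eps by have := f_ge0 s0; rewrite /eps; lra.
have [N HN] := inv_succ_lt eps_gt0.
exists (fun s => Rmax (g N s + - eps * h s) 0); split; [|split; [split|]].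
- exact: FVL_max (FVL_add (proj1 (HgF N)) (FVL_scal (- eps) Hh)) (FVL_zero L).
- by move=> s; apply: Rmax_r.
- exists s0; apply: Rgt_not_eq; apply: Rlt_le_trans (Rmax_l _ _).
  have := approx_g N s0; have := h_le1 s0; have := h_ge0 s0; rewrite /eps in HN *.
  by unfold Rabs; case: Rcase_abs; nra.
- move=> s; apply: Rmax_lub; last exact: f_ge0.
  by have := g_le N s; have := h_ge0 s; nra.
Qed.

End Density.

Section SumR.
Variables (A : Type) (l : seq A).
Implicit Types (F G : A -> R).

Lemma sumR_map_le F G : (forall a, F a <= G a) -> sumR (map F l) <= sumR (map G l).
Proof. by move=> FG; elim: l => [|a l' IH] /=; [lra|have := FG a; lra]. Qed.

Lemma sumR_map_ge0 F : (forall a, 0 <= F a) -> 0 <= sumR (map F l).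
Proof. by move=> F_ge0; elim: l => [|a l' IH] /=; [lra|have := F_ge0 a; lra]. Qed.

Lemma sumR_map_scal F c : sumR (map (fun a => c * F a) l) = c * sumR (map F l).
Proof. by elim: l => [|a l' IH] /=; [ring|rewrite IH; ring]. Qed.

Lemma sumR_map_plus F G :
  sumR (map (fun a => F a + G a) l) = sumR (map F l) + sumR (map G l).
Proof. by elim: l => [|a l' IH] /=; [ring|rewrite IH; ring]. Qed.

End SumR.

Lemma Series_zero : Series (fun _ => 0) = 0.
Proof.
transitivity (0 * Series (fun _ => 0)); last ring.
by rewrite -Series_scal_l; apply: Series_ext => n; ring.
Qed.

Lemma Series_ge0 a : (forall n, 0 <= a n) -> ex_series a -> 0 <= Series a.
Proof. by move=> a_ge0 Ha; rewrite -Series_zero; apply: Series_le => // n; split; [lra|]. Qed.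

Lemma sumR_map_Series (A : Type) (a : A -> nat -> R) (l : seq A) :
  (forall x, ex_series (a x)) ->
  ex_series (fun k => sumR (map (fun x => a x k) l)) /\
  sumR (map (fun x => Series (a x)) l) = Series (fun k => sumR (map (fun x => a x k) l)).
Proof.
move=> Ha; elim: l => [|x l [IH1 IH2]] /=.
- split; last by rewrite Series_zero.
  apply: (ex_series_ext (fun n => (1/2) ^ n * 0)); first by move=> n; rewrite Rmult_0_r.
  by apply/ex_series_scal_r/ex_series_geom; rewrite Rabs_pos_eq; lra.
- split; last by rewrite IH2 -Series_plus.
  exact: (@ex_series_plus R_AbsRing R_NormedModule _ _ (Ha x) IH1).
Qed.

Definition half_pow (n : nat) : R := (1/2) ^ n.

Lemma half_pow_gt0 n : 0 < half_pow n.
Proof. by apply: pow_lt; lra. Qed.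

Lemma half_pow_le1 n : half_pow n <= 1.
Proof. by rewrite /half_pow; elim: n => [|n IH] /=; lra. Qed.

Lemma Series_half_pow_shift K : ex_series (fun k => 2 * half_pow (K + k)%coq_nat) /\
  Series (fun k => 2 * half_pow (K + k)%coq_nat) = 4 * half_pow K.
Proof.
have E k : 2 * half_pow (K + k)%coq_nat = (1/2) ^ k * (2 * half_pow K).
  by rewrite /half_pow pow_add; ring.
have Hq : Rabs (1/2) < 1 by rewrite Rabs_pos_eq; lra.
split; last by rewrite (Series_ext _ _ E) Series_scal_r Series_geom //; field.
by apply: (ex_series_ext _ _ (fun k => esym (E k))); apply/ex_series_scal_r/ex_series_geom.
Qed.

Section UnboundedSequence.
Variables (d : Order.disp_t) (L : distrLatticeType d) (u : nat -> L) (p : L).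
Implicit Types (s : Lstar L).

Definition term s n : R := half_pow n * Rabs (ev s (u n) - ev s p).

Lemma term_ge0 s n : 0 <= term s n.
Proof. by apply: Rmult_le_pos; [apply/Rlt_le/half_pow_gt0|apply: Rabs_pos]. Qed.

Lemma term_le s n : term s n <= 2 * half_pow n.
Proof.
have := ev_bound s (u n); have := ev_bound s p; have := half_pow_gt0 n; rewrite /term => *.
have : Rabs (ev s (u n) - ev s p) <= 2 by unfold Rabs; case: Rcase_abs; lra.
nra.
Qed.

Lemma ex_series_term s : ex_series (term s).
Proof.
apply: (@ex_series_le R_AbsRing R_CompleteNormedModule _ (fun n => 2 * half_pow n)).
  move=> n; change (Rabs (term s n) <= 2 * half_pow n).
  by rewrite Rabs_pos_eq; [apply: term_le|apply: term_ge0].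
by have := proj1 (Series_half_pow_shift 0); apply: ex_series_ext.
Qed.

Lemma Series_term_split s K : Series (term s) =
  sum_f_R0 (term s) K + Series (fun k => term s (K.+1 + k)%coq_nat).
Proof. by rewrite (Series_incr_n (term s) K.+1) //; [lia|apply: ex_series_term]. Qed.

Lemma ex_series_term_tail s K : ex_series (fun k => term s (K + k)%coq_nat).
Proof. exact: (proj1 (ex_series_incr_n (term s) K) (ex_series_term s)). Qed.

Lemma term_tail_ge0 s K : 0 <= Series (fun k => term s (K + k)%coq_nat).
Proof. by apply: Series_ge0 => [n|]; [apply: term_ge0|apply: ex_series_term_tail]. Qed.

Lemma term_le_Series s n : term s n <= Series (term s).
Proof.
rewrite (Series_term_split s n); have := term_tail_ge0 s n.+1.
case: n => [|n] /=; first lra.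
by have := cond_pos_sum (term s) n (term_ge0 s); lra.
Qed.

Definition fu s : R := Rmax (Rabs (ev s p) - Series (term s)) 0.

Definition fu_trunc (K : nat) s : R := Rmax (Rabs (ev s p) - sum_f_R0 (term s) K) 0.

Lemma fu_ge0 s : 0 <= fu s.
Proof. exact: Rmax_r. Qed.

Lemma fu_le s : fu s <= Rabs (ev s p).
Proof.
apply: Rmax_lub; last exact: Rabs_pos.
by have := term_le_Series s 0; have := term_ge0 s 0; lra.
Qed.

Lemma pos_hom_fu : pos_hom fu.
Proof.
move=> s t lam lam_ge0 Hts.
have HT n : term t n = lam * term s n.
  by rewrite /term !Hts -Rmult_minus_distr_l Rabs_mult (Rabs_pos_eq lam) //; ring.
rewrite /fu (Series_ext _ _ HT) Series_scal_l Hts Rabs_mult (Rabs_pos_eq lam) //.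
by rewrite -Rmult_minus_distr_l -RmaxRmult // Rmult_0_r.
Qed.

Lemma FVL_term n : FVL (fun s => term s n).
Proof.
have Hdiff := FVL_add (FVL_delta (u n)) (FVL_scal (-1) (FVL_delta p)).
apply: (FVL_ext (FVL_scal (half_pow n) (FVL_abs Hdiff))).
by move=> s; rewrite /term /delta; congr (_ * Rabs _); ring.
Qed.

Lemma FVL_fu_trunc K : FVL (fu_trunc K).
Proof.
have FVL_sum : FVL (fun s => sum_f_R0 (term s) K).
  by elim: K => [|K IH] /=; [apply: FVL_term|apply: FVL_add IH (FVL_term K.+1)].
apply: (FVL_ext (FVL_max (FVL_add (FVL_abs (FVL_delta p)) (FVL_scal (-1) FVL_sum)) (FVL_zero L))).
by move=> s; rewrite /fu_trunc /delta; congr (Rmax _ 0); ring.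
Qed.

Lemma fu_trunc_err s K :
  Rabs (fu s - fu_trunc K s) <= Series (fun k => term s (K.+1 + k)%coq_nat).
Proof.
apply: Rle_trans (Rmax0_sub_le _ _) _; rewrite (Series_term_split s K).
by rewrite Rabs_minus_sym Rabs_pos_eq; [apply: Req_le; ring|have := term_tail_ge0 s K.+1; lra].
Qed.

Lemma sumR_term_le (l : seq (Lstar L)) n :
  (forall x, sumR (map (fun s => Rabs (ev s x)) l) <= 1) ->
  sumR (map (fun s => term s n) l) <= 2 * half_pow n.
Proof.
move=> Hl; rewrite /term sumR_map_scal.
suff : sumR (map (fun s => Rabs (ev s (u n) - ev s p)) l) <= 2 by have := half_pow_gt0 n; nra.
have tri s : Rabs (ev s (u n) - ev s p) <= Rabs (ev s (u n)) + Rabs (ev s p).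
  by have := Rabs_triang (ev s (u n)) (- ev s p); rewrite Rabs_Ropp.
apply: Rle_trans (sumR_map_le _ tri) _.
by rewrite sumR_map_plus; have := Hl (u n); have := Hl p; lra.
Qed.

Lemma FBL_fu : FBL fu.
Proof.
split; [exact: pos_hom_fu|split].
  exists 1 => l Hl; apply: Rle_trans (Hl p); apply: sumR_map_le => s.
  by rewrite Rabs_pos_eq; [apply: fu_le|apply: fu_ge0].
move=> eps eps_gt0.
have [K HK] := pow_lt_1_zero (1/2) ltac:(rewrite Rabs_pos_eq; lra) (eps / 4) ltac:(lra).
exists (fu_trunc K); split=> [|l Hl]; first exact: FVL_fu_trunc.
apply: Rle_trans (sumR_map_le _ (fun s => fu_trunc_err s K)) _.
have [_ ->] := sumR_map_Series l (fun s => ex_series_term_tail s K.+1).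
have [half_pow_ex half_pow_sum] := Series_half_pow_shift K.+1.
apply: (Rle_trans _ _ _ (Series_le _ _ _ half_pow_ex)) => [k|].
  by split; [apply: sumR_map_ge0 => s; apply: term_ge0|apply: sumR_term_le].
have := HK K.+1 ltac:(lia); rewrite half_pow_sum Rabs_pos_eq /half_pow; first lra.
by apply/Rlt_le/pow_lt; lra.
Qed.

Lemma fu_strictly_pos : strictly_pos fu.
Proof.
split; first exact: fu_ge0.
have c_bound : -1 <= 1/2 <= 1 by lra.
exists (exist _ _ (is_lat_hom_const L c_bound)); rewrite /fu.
have -> : Series (term (exist _ _ (is_lat_hom_const L c_bound))) = 0.
  rewrite -Series_zero; apply: Series_ext => n.
  by rewrite /term /ev /= Rminus_diag Rabs_R0 Rmult_0_r.
by rewrite /ev /= Rabs_pos_eq ?Rmax_left; lra.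
Qed.

(* As [|s(u_n)| = 1] and [|s(p)| <= 2^(-n-1)], the summand [term s n] alone dominates [|s(p)|]. *)
Lemma fu_eq0 s1 s n :
  ev s p = half_pow n / 2 * ev s1 p -> Rabs (ev s (u n)) = 1 -> fu s = 0.
Proof.
move=> Hsp Hsu; apply: Rle_antisym (fu_ge0 s); apply: Rmax_lub; last lra.
have := term_le_Series s n; rewrite /term Hsp.
have := Rabs_triang_inv (ev s (u n)) (half_pow n / 2 * ev s1 p); rewrite Hsu.
have := ev_bound s1 p; have := half_pow_gt0 n; have := half_pow_le1 n.
have -> : Rabs (half_pow n / 2 * ev s1 p) = half_pow n / 2 * Rabs (ev s1 p).
  by rewrite Rabs_mult Rabs_pos_eq //; have := half_pow_gt0 n; lra.
by unfold Rabs; repeat case: Rcase_abs; nra.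
Qed.

End UnboundedSequence.

Lemma finite_interval (d : Order.disp_t) (L : latticeType d) (p : L) (F : seq L) :
  exists a b : L, ((a <= p) && (p <= b))%O /\ forall x, x \in F -> ((a <= x) && (x <= b))%O.
Proof.
elim: F => [|y F [a [b [Hp HF]]]]; first by exists p, p; rewrite lexx.
exists (Order.meet a y), (Order.join b y); split.
  by case/andP: Hp => Hap Hpb; rewrite (le_trans (leIl a y) Hap) (le_trans Hpb (leUl b y)).
move=> x; rewrite in_cons => /predU1P [->|/HF /andP [Hax Hxb]]; first by rewrite leIr leUr.
by rewrite (le_trans (leIl a y) Hax) (le_trans Hxb (leUl b y)).
Qed.

Section Chain.
Variables (d : Order.disp_t) (L : distrLatticeType d).
Hypothesis L_total : forall x y : L, (x <= y)%O \/ (y <= x)%O.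

Lemma is_lat_hom_chain (h : L -> R) :
  (forall x, -1 <= h x <= 1) -> (forall x y, (x <= y)%O -> h x <= h y) -> is_lat_hom h.
Proof.
move=> h_bound h_mono; split; [exact: h_bound|split] => x y; case: (L_total x y) => Hxy.
- by rewrite meet_l // Rmin_left //; apply: h_mono.
- by rewrite meet_r // Rmin_right //; apply: h_mono.
- by rewrite join_r // Rmax_right //; apply: h_mono.
- by rewrite join_l // Rmax_left //; apply: h_mono.
Qed.

(* The witness is [c s1] on [[a, b]], [-1] below [a] and [1] above [b]. *)
Lemma Lstar_clip (s1 : Lstar L) (a b : L) c : 0 <= c <= 1 ->
  exists s : Lstar L,
    (forall z, ((a <= z) && (z <= b))%O -> ev s z = c * ev s1 z) /\
    (forall z, ~~ ((a <= z) && (z <= b))%O -> Rabs (ev s z) = 1).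
Proof.
move=> c_bound.
pose h z := if (z <= b)%O then if (a <= z)%O then c * ev s1 z else -1 else 1.
have h_bound z : -1 <= h z <= 1.
  by rewrite /h; have := ev_bound s1 z; case: (z <= b)%O; case: (a <= z)%O => /=; nra.
have h_mono z1 z2 : (z1 <= z2)%O -> h z1 <= h z2.
  move=> Hz; rewrite /h; case: (boolP (z2 <= b)%O) => Hz2b; last first.
    by have := h_bound z1; rewrite /h /=; lra.
  rewrite (le_trans Hz Hz2b); case: (boolP (a <= z1)%O) => Haz1.
    by rewrite (le_trans Haz1 Hz); apply: Rmult_le_compat_l; [lra|apply: ev_le].
  by case: ifP => _; have := ev_bound s1 z2; nra.
exists (exist _ h (is_lat_hom_chain h_bound h_mono)); split=> z; rewrite /ev /= /h.
  by case/andP=> -> ->.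
by case: (a <= z)%O; case: (z <= b)%O => //= _; rewrite ?Rabs_Ropp Rabs_R1.
Qed.

Lemma bounded_of_FVL_order_dense (p : L) : FVL_order_dense L -> countably_order_bounded L.
Proof.
move=> L_dense A [u Hu]; apply: NNPP => A_unbounded.
have [g [Hg [[g_ge0 [s1 gs1]] g_le]]] := L_dense _ (FBL_fu u p) (fu_strictly_pos u p).
have [F HF] := FVL_homog_on Hg.
have [a [b [Hp HFab]]] := finite_interval p F.
have [x [Ax Hx]] : exists x, A x /\ ~~ ((a <= x) && (x <= b))%O.
  apply: NNPP => H; apply: A_unbounded; exists a, b => x Ax; apply/andP.
  by apply: contraT => Hx; exfalso; apply: H; exists x.
have [n Hn] := Hu x Ax.
have c_bound : 0 <= half_pow n / 2 <= 1 by have := half_pow_gt0 n; have := half_pow_le1 n; lra.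
have [s [Hs_in Hs_out]] := Lstar_clip s1 a b c_bound.
have gs : g s = half_pow n / 2 * g s1 by apply: HF; [lra|move=> y /HFab; apply: Hs_in].
have fs : fu u p s = 0 by apply: (fu_eq0 (s1 := s1)); [apply: Hs_in|rewrite Hn; apply: Hs_out].
by have := g_le s; have := g_ge0 s1; rewrite gs fs; have := half_pow_gt0 n; nra.
Qed.

End Chain.

Theorem mainTheorem8 (d : Order.disp_t) (L : distrLatticeType d) (HL : inhabited L) :
  (countably_order_bounded L -> FVL_order_dense L) /\
  ((forall x y : L, (x <= y)%O \/ (y <= x)%O) ->
     FVL_order_dense L -> countably_order_bounded L).
Proof.
case: HL => x0; split; first exact: FVL_order_dense_of_bounded.
by move=> L_total; apply: bounded_of_FVL_order_dense.
Qed.
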